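(* Let $x_1,\dots,x_n\in\mathbb{R}^2$ satisfy $x_i\prec x_j$ whenever $i<j$, and let $p\ge2$. For $k\in\{2,\dots,p\}$ and $i\in\{k,\dots,n\}$, let $C^{MM}_{k,i}$ be the optimal value of the Max-Min $k$-dispersion problem among the points $x_1,\dots,x_i$, i.e. $C^{MM}_{k,i}=\max_{1\le i_1<\dots<i_k\le i}\min_{1\le a<b\le k}d_{i_a,i_b}$. Then $C^{MM}_{2,i}=d_{1,i}$ for all $i\in\{2,\dots,n\}$, and for all $k\in\{3,\dots,p\}$ and $i\in\{k,\dots,n\}$, $$C^{MM}_{k,i}=\max_{j\in\{k-1,\dots,i-1\}}\min\left(C^{MM}_{k-1,j},\,d_{j,i}\right).$$
   Context: For $y=(y^1,y^2),z=(z^1,z^2)\in\mathbb{R}^2$ write $y\prec z$ iff $y^1<z^1$ and $y^2>z^2$. Fix $\alpha>0$, let $d$ be the Euclidean distance, and set $d_{ij}=d(x_i,x_j)^\alpha$. *)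

From HB Require Import structures.
From mathcomp Require Import all_boot all_order all_algebra.
From mathcomp Require Import all_classical all_reals all_analysis.
Set Implicit Arguments. Unset Strict Implicit. Unset Printing Implicit Defensive.
Import Order.TTheory GRing.Theory Num.Theory.
Local Open Scope ring_scope.

Definition prec {R : realType} (y z : R * R) : Prop := y.1 < z.1 /\ z.2 < y.2.

Definition eucl {R : realType} (y z : R * R) : R :=
  Num.sqrt ((y.1 - z.1) ^+ 2 + (y.2 - z.2) ^+ 2).

(* d_{ij} = d(x_i, x_j)^alpha  (points indexed by nat, x_1..x_n used) *)
Definition dd {R : realType} (alpha : R) (x : nat -> R * R) (i j : nat) : R :=
  powR (eucl (x i) (x j)) alpha.

(* admissible index choices 1 <= i_1 < ... < i_k <= i, encoded as
   f : 'I_k -> 'I_(i+1), f a = i_{a+1} *)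
Definition admissible (k i : nat) (f : {ffun 'I_k -> 'I_i.+1}) : bool :=
  [forall a : 'I_k, (0 < f a)%N] &&
  [forall a : 'I_k, forall b : 'I_k, (a < b)%N ==> (f a < f b)%N].

(* C^{MM}_{k,i} = max over admissible choices of min over pairs a<b of d_{i_a,i_b},
   computed in the extended reals (max of empty = -oo, min of empty = +oo). *)
Definition CMM {R : realType} (alpha : R) (x : nat -> R * R) (k i : nat) : \bar R :=
  \big[maxe/-oo%E]_(f : {ffun 'I_k -> 'I_i.+1} | admissible f)
     \big[mine/+oo%E]_(a : 'I_k)
        \big[mine/+oo%E]_(b : 'I_k | (a < b)%N) (dd alpha x (f a) (f b))%:E.

From HB Require Import structures.
From mathcomp Require Import all_boot all_order all_algebra.
From mathcomp Require Import all_classical all_reals all_analysis.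
From mathcomp Require Import lra.
Import Order.TTheory GRing.Theory Num.Theory.
Local Open Scope ring_scope.

(* Along a ≺-chain both coordinate gaps between x_a and x_b grow when the
   index interval [a, b] is enlarged, hence so does d_{a,b}.  For an index
   choice i_1 < ... < i_k <= i this has two consequences: among the pairs
   involving i_k the consecutive pair (i_{k-1}, i_k) is the closest, and
   replacing i_k by i can only increase it.  So the value of the choice is
   at most min (value of i_1 < ... < i_{k-1}, d_{i_{k-1}, i}), and appending i
   to a choice inside {1, ..., j} gives at least min (its value, d_{j, i}).
   For k = 1 every choice has value +oo, so the recursion at k = 1 reads
   C_{2,i} = max_j d_{j,i} = d_{1,i}.  Nothing about d beyond this
   monotonicity is used. *)

Lemma min_bigmax_le d (T : orderType d) (I : finType) (P : pred I)
    (F : I -> T) (x0 c X : T) :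
  (Order.min x0 c <= X)%O -> (forall i, P i -> (Order.min (F i) c <= X)%O) ->
  (Order.min (\big[Order.max/x0]_(i | P i) F i) c <= X)%O.
Proof.
move=> x0X FX; elim/big_ind: _ => // a b aX bX.
by rewrite maxEle; case: ifP.
Qed.

Definition ascending_in {k} i (h : 'I_k -> nat) : Prop :=
  (forall a, 0 < h a <= i)%N /\ (forall a b : 'I_k, a < b -> h a < h b)%N.

Definition belast_idx {k} (h : 'I_k.+1 -> nat) (a : 'I_k) : nat :=
  h (widen_ord (leqnSn k) a).

Definition rcons_idx {k} (g : 'I_k -> nat) (i : nat) (a : 'I_k.+1) : nat :=
  if unlift ord_max a is Some a' then g a' else i.

Lemma ascending_le {k i} {h : 'I_k -> nat} {a b : 'I_k} :
  ascending_in i h -> (a <= b)%N -> (h a <= h b)%N.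
Proof.
move=> h_asc; rewrite leq_eqVlt => /orP[/eqP/val_inj -> //|ab].
by apply: ltnW; apply: h_asc.2.
Qed.

Lemma ascending_gt {k i} {h : 'I_k -> nat} (a : 'I_k) :
  ascending_in i h -> (a < h a)%N.
Proof.
move=> h_asc; case: a => t; elim: t => [|t IH] t_lt /=.
  by case/andP: (h_asc.1 (Ordinal t_lt)).
apply: leq_ltn_trans (IH (ltnW t_lt)) _.
exact: (h_asc.2 (Ordinal (ltnW t_lt)) (Ordinal t_lt)).
Qed.

Lemma ascending_belast {m i} {h : 'I_m.+2 -> nat} :
  ascending_in i h -> ascending_in (belast_idx h ord_max) (belast_idx h).
Proof.
move=> h_asc; split=> [a|a b ab]; last exact: h_asc.2.
case/andP: (h_asc.1 (widen_ord (leqnSn _) a)) => -> _ /=.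
by apply: ascending_le h_asc _; rewrite /= -ltnS.
Qed.

Lemma ascending_rcons {k j i} {g : 'I_k -> nat} :
  ascending_in j g -> (j < i)%N -> ascending_in i (rcons_idx g i).
Proof.
move=> [g_pos g_lt] ji; have g_le a : (g a <= i)%N.
  by case/andP: (g_pos a) => _ /leq_trans/(_ (ltnW ji)).
split=> [a|a b]; rewrite /rcons_idx.
  case: (unliftP ord_max a) => [a' _|_].
    by case/andP: (g_pos a') => -> _; rewrite g_le.
  by rewrite leqnn andbT (leq_ltn_trans _ ji).
case: (unliftP ord_max a) => [a' ->|->]; last by rewrite ltnNge -ltnS ltn_ord.
case: (unliftP ord_max b) => [b' ->|_ _]; first by rewrite !lift_max; apply: g_lt.
by case/andP: (g_pos a') => _ /leq_ltn_trans; apply.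
Qed.

Definition interval_mono {R : realType} n (d : nat -> nat -> R) : Prop :=
  forall a a' b' b : nat,
  (1 <= a)%N -> (a <= a')%N -> (a' < b')%N -> (b' <= b)%N -> (b <= n)%N ->
  d a' b' <= d a b.

Section MaxMin.
Variable R : realType.
Implicit Types (d : nat -> nat -> R) (X : \bar R).
Local Open Scope ereal_scope.

Definition spread d {k} (h : 'I_k -> nat) : \bar R :=
  \big[mine/+oo]_(a : 'I_k) \big[mine/+oo]_(b : 'I_k | (a < b)%N)
     (d (h a) (h b))%:E.

(* [CMM alpha x] is convertible to [maxmin (dd alpha x)]. *)
Definition maxmin d k i : \bar R :=
  \big[maxe/-oo]_(f : {ffun 'I_k -> 'I_i.+1} | admissible f)
     spread d (fun a => nat_of_ord (f a)).

Lemma spread_le d {k} (h : 'I_k -> nat) {a b : 'I_k} :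
  (a < b)%N -> spread d h <= (d (h a) (h b))%:E.
Proof.
move=> ab.
exact: le_trans (bigmin_le_cond _ (j := a) _ isT) (bigmin_le_cond _ (j := b) _ ab).
Qed.

Lemma le_spread d {k} (h : 'I_k -> nat) X :
  (forall a b : 'I_k, (a < b)%N -> X <= (d (h a) (h b))%:E) ->
  X <= spread d h.
Proof.
move=> Xle; apply: le_bigmin => [|a _]; first exact: leey.
by apply: le_bigmin => [|b]; [exact: leey | exact: Xle].
Qed.

Lemma le_maxmin d {k i} {h : 'I_k -> nat} :
  ascending_in i h -> spread d h <= maxmin d k i.
Proof.
move=> [h_pos h_lt]; pose f : {ffun 'I_k -> 'I_i.+1} := [ffun a => inord (h a)].
have fE a : nat_of_ord (f a) = h a.
  by rewrite ffunE inordK // ltnS; case/andP: (h_pos a).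
have f_adm : admissible f.
  apply/andP; split; apply/forallP => a; first by rewrite fE; case/andP: (h_pos a).
  by apply/forallP => b; apply/implyP; rewrite !fE; apply: h_lt.
have -> : h = (fun a => nat_of_ord (f a)) by apply/funext => a; rewrite fE.
exact: le_bigmax_cond.
Qed.

Lemma mine_maxmin_le d k i c X :
  (forall h : 'I_k -> nat, ascending_in i h -> mine (spread d h) c <= X) ->
  mine (maxmin d k i) c <= X.
Proof.
move=> spreadX; apply: min_bigmax_le => [|f /andP[/forallP f_pos /forallP f_lt]].
  by rewrite ge_min leNye.
apply: spreadX; split=> [a|a b ab]; first by rewrite f_pos -ltnS ltn_ord.
by move/forallP/(_ b)/implyP: (f_lt a); apply.
Qed.

Lemma maxmin_le d k i X :
  (forall h : 'I_k -> nat, ascending_in i h -> spread d h <= X) ->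
  maxmin d k i <= X.
Proof.
move=> spreadX; rewrite -[maxmin d k i]miney.
by apply: mine_maxmin_le => h /spreadX; rewrite miney.
Qed.

Lemma maxmin1 d j : (1 <= j)%N -> maxmin d 1 j = +oo.
Proof.
move=> j_gt0; apply/eqP; rewrite -leye_eq.
have one_asc : ascending_in j (fun _ : 'I_1 => 1%N).
  by split=> // a b; rewrite !ord1.
apply: le_trans (le_maxmin d one_asc).
by apply: le_spread => a b; rewrite !ord1.
Qed.

Section Recursion.
Variables (d : nat -> nat -> R) (n : nat).
Hypothesis d_mono : interval_mono n d.

Lemma spread_le_belast {m i} {h : 'I_m.+2 -> nat} :
  ascending_in i h -> (i <= n)%N ->
  spread d h <= mine (spread d (belast_idx h)) (d (belast_idx h ord_max) i)%:E.
Proof.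
move=> h_asc i_le; rewrite le_min; apply/andP; split.
  by apply: le_spread => a b ab; apply: spread_le.
have penult_lt : (widen_ord (leqnSn m.+1) ord_max < @ord_max m.+1)%N.
  exact: ltnSn.
apply: le_trans (spread_le d h penult_lt) _; rewrite lee_fin.
case/andP: (h_asc.1 (widen_ord (leqnSn _) ord_max)) => penult_gt0 _.
case/andP: (h_asc.1 ord_max) => _ last_le.
by apply: d_mono => //; exact: h_asc.2.
Qed.

Lemma spread_rcons_ge {k j i} {g : 'I_k -> nat} :
  ascending_in j g -> (j < i)%N -> (i <= n)%N ->
  mine (spread d g) (d j i)%:E <= spread d (rcons_idx g i).
Proof.
move=> g_asc ji i_le; apply: le_spread => a b; rewrite /rcons_idx.
case: (unliftP ord_max a) => [a' ->|->]; last by rewrite ltnNge -ltnS ltn_ord.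
case: (unliftP ord_max b) => [b' ->|_ _].
  by rewrite !lift_max => ab; rewrite ge_min (spread_le d g ab).
rewrite ge_min lee_fin; apply/orP; right.
by case/andP: (g_asc.1 a') => ga_pos ga_le; apply: d_mono.
Qed.

Lemma maxmin_rec m i : (m.+2 <= i <= n)%N ->
  maxmin d m.+2 i =
    \big[maxe/-oo]_(m.+1 <= j < i) mine (maxmin d m.+1 j) (d j i)%:E.
Proof.
case/andP=> _ i_le; apply/le_anti/andP; split.
  apply: maxmin_le => h h_asc; apply: le_trans (spread_le_belast h_asc i_le) _.
  set penult := widen_ord (leqnSn m.+1) ord_max; set j := h penult.
  have j_ge : (m.+1 <= j)%N := ascending_gt penult h_asc.
  have j_lt : (j < i)%N.
    apply: leq_trans (h_asc.2 penult ord_max (ltnSn m)) _.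
    by case/andP: (h_asc.1 ord_max).
  have j_in : j \in index_iota m.+1 i by rewrite mem_index_iota j_ge.
  apply: le_trans (le_bigmax_seq _ j _ _ j_in isT).
  by rewrite le_min !ge_min lexx orbT (le_maxmin d (ascending_belast h_asc)).
rewrite big_nat_cond; apply: bigmax_le => [|j /andP[/andP[_ j_lt] _]].
  exact: leNye.
apply: mine_maxmin_le => g g_asc.
exact: le_trans (spread_rcons_ge g_asc j_lt i_le)
                (le_maxmin d (ascending_rcons g_asc j_lt)).
Qed.

Lemma maxmin2 i : (2 <= i <= n)%N -> maxmin d 2 i = (d 1 i)%:E.
Proof.
case/andP=> i_ge i_le; rewrite maxmin_rec ?i_ge //.
rewrite (eq_big_nat _ _ (F2 := fun j => (d j i)%:E)) => [|j /andP[j_ge _]].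
  rewrite big_ltn //; apply/max_idPl; rewrite big_nat_cond.
  apply: bigmax_le => [|j /andP[/andP[j_ge j_lt] _]]; first exact: leNye.
  by rewrite lee_fin; apply: d_mono => //; apply: ltnW.
by rewrite maxmin1 // minye.
Qed.

End Recursion.
End MaxMin.

Lemma eucl_le_nested (R : realType) (y y' z' z : R * R) :
  y.1 <= y'.1 -> y'.1 <= z'.1 -> z'.1 <= z.1 ->
  z.2 <= z'.2 -> z'.2 <= y'.2 -> y'.2 <= y.2 ->
  eucl y' z' <= eucl y z.
Proof.
move=> *; rewrite /eucl ler_sqrt ?addr_ge0 ?sqr_ge0 // !expr2; nra.
Qed.

Section PrecChain.
Variables (R : realType) (n : nat) (x : nat -> R * R).
Hypothesis x_chain : forall i j : nat,
  (1 <= i)%N -> (i < j)%N -> (j <= n)%N -> prec (x i) (x j).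

Lemma prec_chain_le {a b} : (1 <= a)%N -> (a <= b)%N -> (b <= n)%N ->
  (x a).1 <= (x b).1 /\ (x b).2 <= (x a).2.
Proof.
move=> a_ge; rewrite leq_eqVlt => /orP[/eqP -> //|ab b_le].
by have [lt1 lt2] := x_chain _ _ a_ge ab b_le; rewrite !ltW.
Qed.

Lemma dd_interval_mono (alpha : R) : 0 <= alpha -> interval_mono n (dd alpha x).
Proof.
move=> alpha_ge0 a a' b' b a_ge aa' a'b' b'b b_le.
have b'_le := leq_trans b'b b_le; have a'_ge := leq_trans a_ge aa'.
have [a_a'1 a_a'2] := prec_chain_le a_ge aa' (leq_trans (ltnW a'b') b'_le).
have [a'_b'1 a'_b'2] := prec_chain_le a'_ge (ltnW a'b') b'_le.
have [b'_b1 b'_b2] := prec_chain_le (leq_trans a'_ge (ltnW a'b')) b'b b_le.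
apply: ge0_ler_powR; rewrite ?nnegrE ?sqrtr_ge0 //.
exact: eucl_le_nested.
Qed.

End PrecChain.

Theorem proposition9 (R : realType) (alpha : R) (n p : nat) (x : nat -> R * R) :
  0 < alpha -> (2 <= p)%N ->
  (forall i j : nat, (1 <= i)%N -> (i < j)%N -> (j <= n)%N -> prec (x i) (x j)) ->
  (forall i : nat, (2 <= i <= n)%N -> CMM alpha x 2 i = (dd alpha x 1 i)%:E) /\
  (forall k i : nat, (3 <= k <= p)%N -> (k <= i <= n)%N ->
     CMM alpha x k i =
       \big[maxe/-oo%E]_(k.-1 <= j < i) mine (CMM alpha x k.-1 j) (dd alpha x j i)%:E).
Proof.
move=> alpha_gt0 _ x_chain.
have d_mono := @dd_interval_mono R n x x_chain alpha (ltW alpha_gt0).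
split=> [i i_range|[|[|[|m]]] // i _ i_range].
  exact: (@maxmin2 R _ n d_mono i i_range).
exact: (@maxmin_rec R _ n d_mono m.+1 i i_range).
Qed.
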